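(* On a cell of the combinatorial model whose ribbon graph $\Gamma$ has only odd-valent vertices, for every edge $e$ with length $\ell$ one has $\Omega[\mathcal P(d\ell)]=d\ell$, where $$\Omega=\sum_f\eta_f,\qquad \mathcal P=\frac14\sum_{x\in V(\Gamma)}\sum_{1\le j<k\le n_x}(-1)^{k-j-1}\frac{\partial}{\partial\ell_j}\wedge\frac{\partial}{\partial\ell_k}.$$
   Context: $\Gamma$ is a metric ribbon graph (from a Jenkins–Strebel differential) with edge lengths $\ell_e$ as coordinates on the cell and faces $f$. For a face $f$ with boundary edges $e_1,\dots,e_{n_f}$ in counterclockwise order, $\eta_f=\sum_{1\le j<k\le n_f}d\ell_j\wedge d\ell_k$. In $\mathcal P$, for each vertex $x$ of valence $n_x$, $e_1,\dots,e_{n_x}$ are the edges incident to $x$ in counterclockwise order with lengths $\ell_1,\dots,\ell_{n_x}$ (both $\Omega$ and $\mathcal P$ are independent of the choice of the first edge). $\mathcal P(d\ell)$ denotes the contraction of the bivector with $d\ell$ and $\Omega[X]$ the contraction of the 2-form with the vector field $X$. *)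

(* Constant-coefficient forms / bivectors on R^E (E = edges). *)
From HB Require Import structures.
From mathcomp Require Import all_boot all_order all_algebra all_fingroup.
Set Implicit Arguments. Unset Strict Implicit. Unset Printing Implicit Defensive.
Import Order.TTheory GRing.Theory Num.Theory.
Local Open Scope ring_scope.

Section RibbonForms.
Variables (R : realFieldType) (D E : finType).
(* D = darts (half-edges), emap h = the edge carrying the dart h *)
Variable emap : D -> E.

Definition cyc (p : {perm D}) (h : D) : seq D := traject p h #|porbit p h|.

(* sum over the cycles of p of a quantity depending on the cyclic sequence
   (any starting point; the quantities used below do not depend on it) *)
Definition cycle_sum (p : {perm D}) (G : seq D -> R) : R :=
  \sum_(X in porbits p) match [pick h in X] with Some h => G (cyc p h) | None => 0 end.

(* coefficients of a 2-form / bivector: a ^ b = a (x) b - b (x) a *)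
Definition wedge (a b : E) (i j : E) : R :=
  (i == a)%:R * (j == b)%:R - (i == b)%:R * (j == a)%:R.

Definition eta_seq (s : seq E) (i j : E) : R :=
  \sum_(j0 < size s) \sum_(k0 < size s | (j0 < k0)%N)
     wedge (tnth (in_tuple s) j0) (tnth (in_tuple s) k0) i j.

Definition pvert_seq (s : seq E) (i j : E) : R :=
  \sum_(j0 < size s) \sum_(k0 < size s | (j0 < k0)%N)
     (-1) ^+ (k0 - j0 - 1)%N * wedge (tnth (in_tuple s) j0) (tnth (in_tuple s) k0) i j.

(* sigma : counterclockwise rotation of darts around their vertex,
   iota : edge involution.  Face boundaries traversed counterclockwise
   (face on the left) are the cycles of h |-> sigma^-1 (iota h),
   i.e. of the permutation (iota * sigma^-1)%g  (mathcomp: (s*t) x = t (s x)). *)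
Definition face_perm (sigma iota : {perm D}) : {perm D} := (iota * sigma^-1)%g.

Definition Omega (sigma iota : {perm D}) (i j : E) : R :=
  cycle_sum (face_perm sigma iota) (fun s => eta_seq (map emap s) i j).

Definition Pbiv (sigma : {perm D}) (i j : E) : R :=
  4%:R^-1 * cycle_sum sigma (fun s => pvert_seq (map emap s) i j).

Definition dl (e : E) : E -> R := fun i => (i == e)%:R.

(* P(alpha) = contraction of the bivector with alpha (first slot) *)
Definition contrP (sigma : {perm D}) (alpha : E -> R) : E -> R :=
  fun b => \sum_a alpha a * Pbiv sigma a b.

(* Omega[X] = contraction of the 2-form with the vector X (first slot) *)
Definition contrO (sigma iota : {perm D}) (X : E -> R) : E -> R :=
  fun c => \sum_a X a * Omega sigma iota a c.

(* tangent vectors to the cell (all face perimeters fixed) *)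
Definition tangent (sigma iota : {perm D}) (v : E -> R) : Prop :=
  forall F, F \in porbits (face_perm sigma iota) -> \sum_(h in F) v (emap h) = 0.

End RibbonForms.

(* Pairing P(dl_e) with a function w on darts splits into one alternating
   sum per vertex.  If w (y) + w (iota y) = Q (y) + Q (fp (iota y)) for a
   potential Q on darts (fp the face permutation), then around a vertex of odd
   valence these alternating sums telescope, and the pairing becomes a quarter
   of the jumps Q - Q o fp at the two darts of e.  For tangency, w = Q is the
   indicator of a face, which has no jumps.  For Omega[P(dl_e)] against a
   tangent v, w is the v-length of the face boundary after a dart minus the
   length before it, Q = w + v o emap, and each jump is 2 v(e). *)

From HB Require Import structures.
From mathcomp Require Import all_boot all_order all_algebra all_fingroup.
From mathcomp Require Import zify ring lra.
Set Implicit Arguments. Unset Strict Implicit. Unset Printing Implicit Defensive.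
Import Order.TTheory GRing.Theory Num.Theory.
Local Open Scope ring_scope.

Section Pairing.
Variables (R : realFieldType) (E : finType).
Implicit Types (M : E -> E -> R) (X v : E -> R).

Definition pairing M X v : R := \sum_c (\sum_a X a * M a c) * v c.

Lemma sum_mul_delta (F : E -> R) p : \sum_a F a * (a == p)%:R = F p.
Proof.
rewrite (bigD1 p) //= eqxx mulr1 big1 ?addr0 // => a /negbTE ->.
by rewrite mulr0.
Qed.

Lemma eq_pairing M M' X v : M =2 M' -> pairing M X v = pairing M' X v.
Proof. by move=> eqM; apply: eq_bigr => c _; under eq_bigr do rewrite eqM. Qed.

Lemma pairing_sum I (r : seq I) (P : pred I) (M : I -> E -> E -> R) X v :
  pairing (fun a c => \sum_(i <- r | P i) M i a c) X v =
  \sum_(i <- r | P i) pairing (M i) X v.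
Proof.
rewrite /pairing [RHS]exchange_big /=; apply: eq_bigr => c _.
rewrite -mulr_suml; congr (_ * _).
under eq_bigr do rewrite mulr_sumr.
by rewrite exchange_big.
Qed.

Lemma pairing_scale (k : R) M X v :
  pairing (fun a c => k * M a c) X v = k * pairing M X v.
Proof.
rewrite /pairing mulr_sumr; apply: eq_bigr => c _; rewrite mulrA; congr (_ * _).
by rewrite mulr_sumr; apply: eq_bigr => a _; rewrite mulrCA.
Qed.

Lemma pairing_wedge p q X v : pairing (wedge R p q) X v = X p * v q - X q * v p.
Proof.
rewrite /pairing /wedge.
under eq_bigr do under eq_bigr do rewrite mulrBr !mulrA.
under eq_bigr do rewrite sumrB -!mulr_suml !sum_mul_delta mulrBl.
rewrite sumrB.
under eq_bigr do rewrite mulrAC -mulrA.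
under [X in _ - X]eq_bigr do rewrite mulrAC -mulrA.
by rewrite -!mulr_sumr !sum_mul_delta.
Qed.

Definition wedge_sum (c : nat -> nat -> R) (s : seq E) (a b : E) : R :=
  \sum_(j < size s) \sum_(k < size s | (j < k)%N)
     c j k * wedge R (tnth (in_tuple s) j) (tnth (in_tuple s) k) a b.

Lemma eta_seq_wedge_sum s : eta_seq R s =2 wedge_sum (fun _ _ => 1) s.
Proof. by move=> a b; apply: eq_bigr => j _; apply: eq_bigr => k _; rewrite mul1r. Qed.

Lemma pvert_seq_wedge_sum s :
  pvert_seq R s =2 wedge_sum (fun j k => (-1) ^+ (k - j - 1)) s.
Proof. by []. Qed.

Lemma pairing_wedge_sum c s X v :
  pairing (wedge_sum c s) X v =
  \sum_(j < size s) X (tnth (in_tuple s) j) *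
     (\sum_(k < size s | (j < k)%N) c j k * v (tnth (in_tuple s) k)
      - \sum_(k < size s | (k < j)%N) c k j * v (tnth (in_tuple s) k)).
Proof.
rewrite pairing_sum; under eq_bigr do rewrite pairing_sum.
under eq_bigr do under eq_bigr do rewrite pairing_scale pairing_wedge mulrBr.
under eq_bigr do rewrite sumrB.
rewrite sumrB [X in _ - X](exchange_big_dep xpredT) //= -sumrB.
apply: eq_bigr => j _; rewrite mulrBr !mulr_sumr.
by congr (_ - _); apply: eq_bigr => k _; rewrite mulrCA.
Qed.

Lemma pairing_cycle_sum (D : finType) (p : {perm D}) (M : seq D -> E -> E -> R) X v :
  pairing (fun a c => cycle_sum p (fun s => M s a c)) X v =
  cycle_sum p (fun s => pairing (M s) X v).
Proof.
rewrite /cycle_sum pairing_sum; apply: eq_bigr => Y _.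
case: pickP => [h _|_] //.
by rewrite /pairing big1 // => c _; rewrite big1 ?mul0r // => a _; rewrite mulr0.
Qed.

End Pairing.

Section PermOrbits.
Variable D : finType.
Implicit Types (p : {perm D}) (x y h : D).

Lemma mem_porbit_iter p k x : iter k p x \in porbit p x.
Proof. by rewrite -permX mem_porbit. Qed.

Lemma porbit_perm_mem p x y : (p x \in porbit p y) = (x \in porbit p y).
Proof. by rewrite -{1}(expg1 p) -!eq_porbit_mem porbit_perm. Qed.

(* the dart from which [cycle_sum] reads off the cycle of [x] *)
Definition porbit_base p x : D := odflt x [pick y in porbit p x].

Lemma porbit_base_mem p x : porbit_base p x \in porbit p x.
Proof. by rewrite /porbit_base; case: pickP => [y ->|/(_ x)] //; rewrite porbit_id. Qed.

Lemma porbit_baseE p x : porbit p (porbit_base p x) = porbit p x.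
Proof. by apply/eqP; rewrite eq_porbit_mem porbit_base_mem. Qed.

Lemma porbit_base_eq p x y : y \in porbit p x -> porbit_base p y = porbit_base p x.
Proof.
move=> yx; rewrite /porbit_base.
have -> : porbit p y = porbit p x by apply/eqP; rewrite eq_porbit_mem.
by case: pickP => [z _|/(_ x)] //; rewrite porbit_id.
Qed.

Lemma porbit_base_perm p x : porbit_base p (p x) = porbit_base p x.
Proof. by apply: porbit_base_eq; rewrite porbit_perm_mem porbit_id. Qed.

Lemma porbit_base_iter p k h :
  porbit_base p h = h -> porbit_base p (iter k p h) = h.
Proof. by move=> hb; rewrite (porbit_base_eq (mem_porbit_iter p k h)). Qed.

Definition porbit_pos p x : nat := index x (cyc p (porbit_base p x)).

Lemma porbit_pos_lt p x : (porbit_pos p x < #|porbit p x|)%N.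
Proof.
rewrite /porbit_pos -[in X in (_ < X)%N]porbit_baseE /cyc.
by rewrite -{2}(size_traject p (porbit_base p x) #|_|) index_mem
  -porbit_traject porbit_baseE porbit_id.
Qed.

Lemma iter_porbit_pos p x : iter (porbit_pos p x) p (porbit_base p x) = x.
Proof.
have lt_pos := porbit_pos_lt p x; rewrite -porbit_baseE in lt_pos.
rewrite -(nth_traject p lt_pos) nth_index // /cyc.
by rewrite -porbit_traject porbit_baseE porbit_id.
Qed.

Lemma porbit_pos_iter p k h : porbit_base p h = h -> (k < #|porbit p h|)%N ->
  porbit_pos p (iter k p h) = k.
Proof.
move=> hb lt_k; rewrite /porbit_pos porbit_base_iter // /cyc -(nth_traject p lt_k h).
by rewrite index_uniq ?size_traject ?uniq_traject_porbit.
Qed.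

Lemma card_porbit_perm p x : #|porbit p (p x)| = #|porbit p x|.
Proof. by rewrite -{2}(expg1 p) porbit_perm. Qed.

Lemma porbit_pos_perm p x : porbit_pos p (p x) =
  if ((porbit_pos p x).+1 < #|porbit p x|)%N then (porbit_pos p x).+1 else 0%N.
Proof.
set h := porbit_base p x; set j := porbit_pos p x.
have hb : porbit_base p h = h by rewrite /h (porbit_base_eq (porbit_base_mem p x)).
have card_h : #|porbit p h| = #|porbit p x| by rewrite porbit_baseE.
have -> : p x = iter j.+1 p h by rewrite iterS iter_porbit_pos.
case: ifP => lt_j; first by rewrite porbit_pos_iter // card_h.
have -> : j.+1 = #|porbit p h|.
  by apply/eqP; rewrite card_h eqn_leq porbit_pos_lt leqNgt lt_j.
by rewrite iter_porbit -[h]/(iter 0 p h) porbit_pos_iter // card_h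
  (leq_ltn_trans _ (porbit_pos_lt p x)).
Qed.

Lemma sum_porbit_iter (R : nmodType) p h (F : D -> R) :
  \sum_(x in porbit p h) F x = \sum_(0 <= k < #|porbit p h|) F (iter k p h).
Proof.
rewrite (eq_bigl _ _ (porbit_traject p h)) -big_uniq ?uniq_traject_porbit //.
rewrite (big_nth h) size_traject; apply: eq_big_nat => k /andP [_ lt_k].
by rewrite nth_traject.
Qed.

Lemma cycle_sum_darts (R : realFieldType) p (G : seq D -> R) (f : D -> R) :
  (forall h, porbit_base p h = h -> G (cyc p h) = \sum_(x in porbit p h) f x) ->
  cycle_sum p G = \sum_x f x.
Proof.
move=> Gf; rewrite /cycle_sum (partition_big_imset (porbit p)) /=.
apply: eq_bigr => X /imsetP [y _ ->].
case pick_y: [pick h in porbit p y] => [h|]; last first.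
  by move: pick_y; case: pickP => // /(_ y); rewrite porbit_id.
have hy : h \in porbit p y by move: pick_y; case: pickP => // z yz [<-].
have orb_y : porbit p y = porbit p h by apply/eqP; rewrite eq_sym eq_porbit_mem.
rewrite Gf; last by rewrite /porbit_base -orb_y pick_y.
by rewrite orb_y; apply: eq_bigl => x; rewrite eq_porbit_mem.
Qed.

End PermOrbits.

Section AlternatingSums.
Variable R : realFieldType.
Implicit Types (q : nat -> R) (m j k : nat).

Definition cycle_pred m k : nat := if k is k'.+1 then k' else m.-1.

Lemma alt_sum_right q m n j : (j + n.+1 = m)%N ->
  \sum_(j.+1 <= k < m) (-1) ^+ (k - j - 1) * (q k + q (cycle_pred m k))
  = q j - (-1) ^+ n * q m.-1.
Proof.
elim: n j => [|n IHn] j def_m.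
  by rewrite -def_m addn1 big_geq // expr0 mul1r subrr.
rewrite big_ltn; last by lia.
rewrite (_ : j.+1 - j - 1 = 0)%N; last by lia.
rewrite (eq_big_nat _ _ (F2 := fun k =>
  - ((-1) ^+ (k - j.+1 - 1) * (q k + q (cycle_pred m k))))); last first.
  move=> k /andP [lt_jk _]; rewrite (_ : k - j - 1 = (k - j.+1 - 1).+1)%N; last by lia.
  by rewrite exprS mulN1r mulNr.
rewrite sumrN IHn; last by lia.
rewrite /= exprS; lra.
Qed.

Lemma alt_sum_left q m j :
  \sum_(0 <= k < j.+1) (-1) ^+ (j - k) * (q k + q (cycle_pred m k))
  = q j + (-1) ^+ j * q m.-1.
Proof.
elim: j => [|j IHj]; first by rewrite big_nat1 subnn expr0 !mul1r.
rewrite big_nat_recr //= subnn expr0 mul1r.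
rewrite (eq_big_nat _ _ (F2 := fun k =>
  - ((-1) ^+ (j - k) * (q k + q (cycle_pred m k))))); last first.
  move=> k /andP [_ lt_kj]; rewrite (_ : j.+1 - k = (j - k).+1)%N; last by lia.
  by rewrite exprS mulN1r mulNr.
rewrite sumrN IHj exprS; lra.
Qed.

(* On a cycle of odd length the edge values [q k + q (cycle_pred m k)] determine
   the differences [q j - q (cycle_pred m j)]: the two boundary terms in
   [q m.-1] carry the signs [(-1)^(m-j-1)] and [(-1)^(j-1)], which cancel
   exactly when [m] is odd. *)
Lemma alt_sum_cyclic q m j : odd m -> (j < m)%N ->
  \sum_(j.+1 <= k < m) (-1) ^+ (k - j - 1) * (q k + q (cycle_pred m k))
  - \sum_(0 <= k < j) (-1) ^+ (j - k - 1) * (q k + q (cycle_pred m k))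
  = q j - q (cycle_pred m j).
Proof.
move=> odd_m lt_jm; rewrite (@alt_sum_right q m (m - j.+1)); last by lia.
case: j lt_jm => [|j] lt_jm.
  rewrite big_geq // subr0 -signr_odd (_ : odd (m - 1) = false) ?expr0 ?mul1r //.
  by move: odd_m; case: m lt_jm => // m _; rewrite subn1 /= => /negbTE.
rewrite (eq_big_nat _ _ (F2 := fun k =>
  (-1) ^+ (j - k) * (q k + q (cycle_pred m k)))); last first.
  by move=> k /andP [_ lt_kj]; rewrite (_ : j.+1 - k - 1 = j - k)%N //; lia.
rewrite alt_sum_left -(signr_odd _ (m - j.+2)) -(signr_odd _ j).
have -> : odd (m - j.+2) = ~~ odd j.
  have def_m : m = ((m - j.+2) + j).+2 by lia.
  by move: odd_m; rewrite {1}def_m /= negbK oddD; case: (odd j); case: odd.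
by case: (odd j); rewrite /= ?expr0 ?expr1; lra.
Qed.

End AlternatingSums.

Section CyclicWedgeSums.
Variables (R : realFieldType) (D E : finType) (emap : D -> E).

Lemma tnth_map_cyc (p : {perm D}) h (k : 'I_(size (map emap (cyc p h)))) :
  tnth (in_tuple (map emap (cyc p h))) k = emap (iter k p h).
Proof.
have lt_k : (k < #|porbit p h|)%N.
  by rewrite -(size_traject p h #|_|) -(size_map emap) ltn_ord.
by rewrite (tnth_nth (emap h)) /= (nth_map h) ?nth_traject ?size_traject.
Qed.

Lemma pairing_wedge_sum_cyc (c : nat -> nat -> R) (p : {perm D}) h X v :
  pairing (wedge_sum c (map emap (cyc p h))) X v =
  \sum_(0 <= j < #|porbit p h|) X (emap (iter j p h)) *
     (\sum_(j.+1 <= k < #|porbit p h|) c j k * v (emap (iter k p h))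
      - \sum_(0 <= k < j) c k j * v (emap (iter k p h))).
Proof.
rewrite pairing_wedge_sum.
under eq_bigr => j _.
  rewrite tnth_map_cyc; under eq_bigr => k _ do rewrite tnth_map_cyc.
  under [in X in _ - X]eq_bigr => k _ do rewrite tnth_map_cyc.
  over.
rewrite /= size_map /cyc size_traject big_mkord; apply: eq_bigr => j _.
congr (_ * (_ - _)); first by rewrite big_geq_mkord.
by rewrite (big_nat_widen 0 j _ xpredT _ (ltnW (ltn_ord j))) big_mkord.
Qed.

End CyclicWedgeSums.

Section RibbonGraph.
Variables (R : realFieldType) (D E : finType) (sigma iota : {perm D}) (emap : D -> E).
Hypotheses (iota_invol : involutive iota) (iota_nofix : forall h, iota h != h)
  (emap_fibre : forall h h', emap h = emap h' <-> (h' = h \/ h' = iota h))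
  (valence_odd : forall h, odd #|porbit sigma h|).

Local Notation fp := (face_perm sigma iota).

Lemma face_perm_iota y : fp (iota y) = (sigma^-1)%g y.
Proof. by rewrite /face_perm permM iota_invol. Qed.

Lemma emap_eq x y : (emap x == emap y) = (x == y) || (x == iota y).
Proof.
apply/idP/idP => [/eqP/esym/emap_fibre [] -> | /orP [] /eqP ->].
- by rewrite eqxx.
- by rewrite eqxx orbT.
- by [].
- by apply/eqP/emap_fibre; right; rewrite iota_invol.
Qed.

Lemma emap_iota x : emap (iota x) = emap x.
Proof. by apply/eqP; rewrite emap_eq eqxx orbT. Qed.

Lemma sum_emap_eq (F : D -> R) y :
  \sum_(x | emap x == emap y) F x = F y + F (iota y).
Proof.
rewrite (eq_bigl _ _ (fun x => emap_eq x y)) (bigD1 y) ?eqxx //=.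
rewrite (bigD1 (iota y)) /= ?eqxx ?orbT ?iota_nofix // big1 ?addr0 //.
move=> x /andP [/andP [x_on_y /negbTE ne_xy] /negbTE ne_xiy].
by move: x_on_y; rewrite ne_xy ne_xiy.
Qed.

Lemma sum_emap_eq_natr (F : D -> R) h :
  \sum_x (emap x == emap h)%:R * F x = F h + F (iota h).
Proof.
rewrite -sum_emap_eq [RHS]big_mkcond; apply: eq_bigr => x _.
by case: eqP; rewrite ?mul1r ?mul0r.
Qed.

Lemma pairing_pvert_cyc e (w Q : D -> R) h :
  (forall y, w y + w (iota y) = Q y + Q ((sigma^-1)%g y)) ->
  pairing (pvert_seq R (map emap (cyc sigma h))) (dl R e)
    (fun c => \sum_(x | emap x == c) w x)
  = \sum_(x in porbit sigma h) (emap x == e)%:R * (Q x - Q ((sigma^-1)%g x)).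
Proof.
move=> wQ; rewrite (eq_pairing _ _ (pvert_seq_wedge_sum R _)) pairing_wedge_sum_cyc.
rewrite sum_porbit_iter; set m := #|porbit sigma h|.
pose q k := Q (iter k sigma h).
have Q_pred k : (k < m)%N -> Q ((sigma^-1)%g (iter k sigma h)) = q (cycle_pred m k).
  case: k => [|k] lt_km /=; last by rewrite permK.
  by rewrite -[in LHS](iter_porbit sigma h) -/m -(prednK lt_km) iterS permK.
have edge_val k : (k < m)%N ->
    \sum_(x | emap x == emap (iter k sigma h)) w x = q k + q (cycle_pred m k).
  by move=> lt_km; rewrite sum_emap_eq wQ Q_pred.
apply: eq_big_nat => j /andP [_ lt_jm]; congr (_ * _).
rewrite (eq_big_nat _ _ (F2 := fun k =>
  (-1) ^+ (k - j - 1) * (q k + q (cycle_pred m k)))); last first.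
  by move=> k /andP [_ lt_km]; rewrite edge_val.
rewrite [X in _ - X](eq_big_nat _ _ (F2 := fun k =>
  (-1) ^+ (j - k - 1) * (q k + q (cycle_pred m k)))); last first.
  by move=> k /andP [_ lt_kj]; rewrite edge_val // (ltn_trans lt_kj).
by rewrite alt_sum_cyclic ?valence_odd ?Q_pred.
Qed.

Lemma pairing_contrP_dl (w Q : D -> R) h :
  (forall y, w y + w (iota y) = Q y + Q (fp (iota y))) ->
  \sum_x contrP emap sigma (dl R (emap h)) (emap x) * w x
  = 4%:R^-1 * ((Q h - Q (fp h)) + (Q (iota h) - Q (fp (iota h)))).
Proof.
move=> wQ.
transitivity (pairing (Pbiv R emap sigma) (dl R (emap h))
                (fun c => \sum_(x | emap x == c) w x)).
  rewrite (partition_big emap xpredT) //=; apply: eq_bigr => c _.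
  by rewrite mulr_sumr; apply: eq_big => [x | x /eqP ->].
rewrite /Pbiv pairing_scale pairing_cycle_sum.
rewrite (cycle_sum_darts (f := fun x =>
  (emap x == emap h)%:R * (Q x - Q ((sigma^-1)%g x)))); last first.
  by move=> h0 _; apply: pairing_pvert_cyc => y; rewrite wQ face_perm_iota.
rewrite sum_emap_eq_natr -!face_perm_iota iota_invol; congr (_ * _); ring.
Qed.

Lemma contrP_dl_tangent h :
  tangent emap sigma iota (contrP emap sigma (dl R (emap h))).
Proof.
move=> F /imsetP [y _ ->].
pose in_face x : R := (x \in porbit fp y)%:R.
have in_face_fp x : in_face (fp x) = in_face x by rewrite /in_face porbit_perm_mem.
transitivity (\sum_x contrP emap sigma (dl R (emap h)) (emap x) * in_face x).
  rewrite big_mkcond; apply: eq_bigr => x _.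
  by rewrite /in_face; case: (_ \in _); rewrite ?mulr1 ?mulr0.
rewrite (pairing_contrP_dl (Q := in_face)) => [|x]; last by rewrite in_face_fp.
by rewrite !in_face_fp !subrr addr0 mulr0.
Qed.

(* The [v]-length of the boundary of the face of [x] after [x] minus the length
   before it, both read from the dart where [cycle_sum] starts that face. *)
Definition face_balance (v : E -> R) (x : D) : R :=
  \sum_((porbit_pos fp x).+1 <= k < #|porbit fp x|) v (emap (iter k fp (porbit_base fp x)))
  - \sum_(0 <= k < porbit_pos fp x) v (emap (iter k fp (porbit_base fp x))).

Lemma pairing_eta_face X v h : porbit_base fp h = h ->
  pairing (eta_seq R (map emap (cyc fp h))) X v
  = \sum_(x in porbit fp h) X (emap x) * face_balance v x.
Proof.
move=> hb; rewrite (eq_pairing _ _ (eta_seq_wedge_sum R _)) pairing_wedge_sum_cyc.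
rewrite sum_porbit_iter; apply: eq_big_nat => j /andP [_ lt_j].
rewrite /face_balance porbit_pos_iter // porbit_base_iter //.
rewrite -[porbit fp (iter j fp h)]porbit_baseE porbit_base_iter //.
by congr (_ * (_ - _)); apply: eq_bigr => k _; rewrite mul1r.
Qed.

Lemma pairing_Omega X v :
  pairing (Omega R emap sigma iota) X v = \sum_x X (emap x) * face_balance v x.
Proof.
rewrite /Omega pairing_cycle_sum; apply: cycle_sum_darts => h hb.
exact: pairing_eta_face.
Qed.

Lemma face_balance_perm v x : tangent emap sigma iota v ->
  face_balance v (fp x) = face_balance v x - v (emap x) - v (emap (fp x)).
Proof.
move=> tv; rewrite /face_balance porbit_base_perm porbit_pos_perm card_porbit_perm.
have lt_j := porbit_pos_lt fp x; have iter_j := iter_porbit_pos fp x.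
move: lt_j iter_j; set h := porbit_base fp x; set j := porbit_pos fp x.
set m := #|porbit fp x| => lt_jm iter_j.
have card_h : #|porbit fp h| = m by rewrite porbit_baseE.
have fp_x : fp x = iter j.+1 fp h by rewrite iterS iter_j.
case: ifP => lt_j1m.
  by rewrite big_nat_recr //= (big_ltn lt_j1m) iter_j -fp_x; lra.
have def_m : j.+1 = m by apply/eqP; rewrite eqn_leq lt_jm leqNgt lt_j1m.
have m_gt0 : (0 < m)%N by rewrite -def_m.
have fp_x_h : fp x = h by rewrite fp_x def_m -card_h iter_porbit.
have perim_h : \sum_(0 <= k < m) v (emap (iter k fp h)) = 0.
  rewrite -card_h -(sum_porbit_iter fp h (fun y => v (emap y))).
  by apply: tv; apply: imset_f.
have perim_first := perim_h; rewrite (big_ltn m_gt0) in perim_first.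
have perim_last := perim_h; rewrite -def_m big_nat_recr //= iter_j in perim_last.
have no_tail : \sum_(j.+1 <= k < m) v (emap (iter k fp h)) = 0.
  by rewrite -def_m big_geq.
rewrite no_tail fp_x_h [X in _ - X]big_geq //; lra.
Qed.

Lemma contrO_contrP_dl v h : tangent emap sigma iota v ->
  \sum_c contrO emap sigma iota (contrP emap sigma (dl R (emap h))) c * v c
  = v (emap h).
Proof.
move=> tv; pose Q x := face_balance v x + v (emap x).
have Q_fp x : Q x - Q (fp x) = 2%:R * v (emap x).
  by rewrite /Q face_balance_perm //; lra.
change (pairing (Omega R emap sigma iota) (contrP emap sigma (dl R (emap h))) v
  = v (emap h)).
rewrite pairing_Omega (pairing_contrP_dl (Q := Q)) => [|y].
  by rewrite !Q_fp emap_iota; field.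
by rewrite /Q face_balance_perm // emap_iota; lra.
Qed.

End RibbonGraph.

Theorem mainTheorem6 (R : realFieldType) (D E : finType)
  (sigma iota : {perm D}) (emap : D -> E)
  (iota_invol : forall h, iota (iota h) = h)
  (iota_nofix : forall h, iota h != h)
  (emap_fibre : forall h h', emap h = emap h' <-> (h' = h \/ h' = iota h))
  (emap_surj : forall e : E, exists h, emap h = e)
  (connected : forall h h' : D,
      connect (fun a b => (b == sigma a) || (b == iota a)) h h')
  (valence_ge3 : forall h : D, (3 <= #|porbit sigma h|)%N)
  (valence_odd : forall h : D, odd #|porbit sigma h|) :
  forall e : E,
    tangent emap sigma iota (contrP (R := R) emap sigma (dl R e)) /\
    (forall v : E -> R, tangent emap sigma iota v ->
       \sum_(c : E) contrO emap sigma iota (contrP emap sigma (dl R e)) c * v c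
       = \sum_(c : E) dl R e c * v c).
Proof.
move=> e; have [h <-] := emap_surj e.
split=> [|v tv]; first exact: contrP_dl_tangent.
rewrite contrO_contrP_dl //.
by under [RHS]eq_bigr do rewrite mulrC; rewrite sum_mul_delta.
Qed.
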